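(* Let $g\ge2$ and $\Sigma_g=\{(z,w)\in(\mathbb{C}\cup\{\infty\})^2: w^{g+1}=z^g(z+1)(z-1)\}$. Let $\eta_1=\frac{dz}{w(z-1)}$, $\eta_2=\frac{w\,dz}{(z+1)(z-1)}$, $\eta_3=\frac{dz}{w(z+1)}$, and for $a_0,a_1,b_0,b_1\in\mathbb{C}$ and nonzero $\alpha,\beta,\gamma\in\mathbb{C}$ set $$\phi_1=\Big(a_0+a_1\big(\tfrac zw\big)^{g-1}\Big)\tfrac{dz}{w}+\alpha\eta_1+\beta\eta_2,\quad \phi_2=\Big(ia_0-ia_1\big(\tfrac zw\big)^{g-1}\Big)\tfrac{dz}{w}+i\alpha\eta_1-i\beta\eta_2,$$ $$\phi_3=\Big(b_0+b_1\big(\tfrac zw\big)^{g-1}\Big)\tfrac{dz}{w}+\beta\eta_2+\gamma\eta_3,\quad \phi_4=\Big(-ib_0+ib_1\big(\tfrac zw\big)^{g-1}\Big)\tfrac{dz}{w}+i\beta\eta_2-i\gamma\eta_3.$$ Then $\sum_{j=1}^4\phi_j^2\equiv0$ if and only if $a_0=-b_0=\frac{\alpha+\gamma}{2}$ and $a_1=-b_1=-\beta$.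
   Context: $\Sigma_g$ denotes the compact Riemann surface (of genus $g$) defined by the given equation, with a single point at $z=\infty$. *)

From HB Require Import structures.
From mathcomp Require Import all_boot all_order all_algebra.
From mathcomp Require Import complex.
From mathcomp Require Import Rstruct.
Set Implicit Arguments. Unset Strict Implicit. Unset Printing Implicit Defensive.
Import Order.TTheory GRing.Theory Num.Theory.
Local Open Scope ring_scope.
Local Open Scope complex_scope.

Notation C := (complex Rdefinitions.R).

Definition on_curve (g : nat) (z w : C) : Prop :=
  w ^+ g.+1 = z ^+ g * (z + 1) * (z - 1).

(* coefficients of dz in eta_1, eta_2, eta_3 and dz/w *)
Definition eta1 (z w : C) : C := (w * (z - 1))^-1.
Definition eta2 (z w : C) : C := w / ((z + 1) * (z - 1)).
Definition eta3 (z w : C) : C := (w * (z + 1))^-1.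
Definition dzw (z w : C) : C := w^-1.

Definition phi1 (g : nat) (a0 a1 al be : C) (z w : C) : C :=
  (a0 + a1 * (z / w) ^+ g.-1) * dzw z w + al * eta1 z w + be * eta2 z w.
Definition phi2 (g : nat) (a0 a1 al be : C) (z w : C) : C :=
  ('i * a0 - 'i * a1 * (z / w) ^+ g.-1) * dzw z w
  + 'i * al * eta1 z w - 'i * be * eta2 z w.
Definition phi3 (g : nat) (b0 b1 be ga : C) (z w : C) : C :=
  (b0 + b1 * (z / w) ^+ g.-1) * dzw z w + be * eta2 z w + ga * eta3 z w.
Definition phi4 (g : nat) (b0 b1 be ga : C) (z w : C) : C :=
  (- 'i * b0 + 'i * b1 * (z / w) ^+ g.-1) * dzw z w
  + 'i * be * eta2 z w - 'i * ga * eta3 z w.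

(* sum_j phi_j^2 == 0 as a meromorphic quadratic differential on Sigma_g:
   its coefficient w.r.t. dz^2 (a meromorphic function on the connected
   surface Sigma_g) vanishes at every affine point of the curve away from the
   finitely many points with w = 0 (where z in {0,1,-1}), i.e. on a dense open set. *)
Definition sum_sq_vanishes (g : nat) (a0 a1 b0 b1 al be ga : C) : Prop :=
  forall z w : C, on_curve g z w -> w != 0 ->
    (phi1 g a0 a1 al be z w) ^+ 2 + (phi2 g a0 a1 al be z w) ^+ 2
    + (phi3 g b0 b1 be ga z w) ^+ 2 + (phi4 g b0 b1 be ga z w) ^+ 2 = 0.

(* Writing phi1 = p + q, phi2 = i (p - q), phi3 = r + s, phi4 = i (r - s), the
   sum of squares is 4 (p q + r s).  There w occurs only through w^-2 and
   (z/w)^(g-1), and the curve equation gives (z/w)^(g-1) = w^2 / (z (z^2 - 1)),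
   so the sum is 4 P(z) dz^2 / (z (z^2 - 1)^2) for a cubic P in z alone.  As z
   takes every value other than 0 and +-1 on the curve, the differential
   vanishes iff the four coefficients of P do, and for nonzero alpha, beta,
   gamma these four bilinear equations are equivalent to the stated values. *)
From HB Require Import structures.
From mathcomp Require Import all_boot all_order all_algebra.
From mathcomp Require Import complex Rstruct.
From mathcomp Require Import ring.
Import Order.TTheory GRing.Theory Num.Theory.
Local Open Scope ring_scope.

Definition cubic {R : comPzRingType} (c3 c2 c1 c0 z : R) : R :=
  c3 * z ^+ 3 + c2 * z ^+ 2 + c1 * z + c0.

Lemma natr_mul_eq0 {R : numDomainType} (k : nat) (x : R) :
  k.+1%:R * x = 0 -> x = 0.
Proof. by move/eqP; rewrite mulf_eq0 pnatr_eq0 => /eqP. Qed.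

Lemma cubic_eq0_at_pm2_pm3 {R : numDomainType} (c3 c2 c1 c0 : R) :
  cubic c3 c2 c1 c0 2 = 0 -> cubic c3 c2 c1 c0 (-2) = 0 ->
  cubic c3 c2 c1 c0 3 = 0 -> cubic c3 c2 c1 c0 (-3) = 0 ->
  [/\ c3 = 0, c2 = 0, c1 = 0 & c0 = 0].
Proof.
set P := cubic c3 c2 c1 c0 => P2 Pm2 P3 Pm3; split.
- apply: (@natr_mul_eq0 _ 59).
  transitivity (2 * (P 3 - P (-3)) - 3 * (P 2 - P (-2))); first by rewrite /P /cubic; ring.
  by rewrite P2 Pm2 P3 Pm3; ring.
- apply: (@natr_mul_eq0 _ 9).
  transitivity ((P 3 + P (-3)) - (P 2 + P (-2))); first by rewrite /P /cubic; ring.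
  by rewrite P2 Pm2 P3 Pm3; ring.
- apply: (@natr_mul_eq0 _ 59).
  transitivity (27 * (P 2 - P (-2)) - 8 * (P 3 - P (-3))); first by rewrite /P /cubic; ring.
  by rewrite P2 Pm2 P3 Pm3; ring.
- apply: (@natr_mul_eq0 _ 9).
  transitivity (9 * (P 2 + P (-2)) - 4 * (P 3 + P (-3))); first by rewrite /P /cubic; ring.
  by rewrite P2 Pm2 P3 Pm3; ring.
Qed.

Lemma natrSS_pm1_neq0 {R : numDomainType} (n : nat) :
  [/\ n.+2%:R != 0 :> R, n.+2%:R + 1 != 0 :> R & n.+2%:R - 1 != 0 :> R].
Proof. by rewrite -natr1 addrK !natr1 !pnatr_eq0. Qed.

Lemma opp_natrSS_pm1_neq0 {R : numDomainType} (n : nat) :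
  [/\ - n.+2%:R != 0 :> R, - n.+2%:R + 1 != 0 :> R & - n.+2%:R - 1 != 0 :> R].
Proof.
by have [? ? ?] := @natrSS_pm1_neq0 R n; split; rewrite -oppr_eq0 ?opprD !opprK.
Qed.

Section Curve.

Variable g : nat.
Hypothesis g_gt0 : (0 < g)%N.

Lemma on_curve_neq0 {z w : C} : on_curve g z w -> w != 0 ->
  [/\ z != 0, z + 1 != 0 & z - 1 != 0].
Proof.
move=> curve w_neq0; have := expf_neq0 g.+1 w_neq0.
by rewrite curve !mulf_eq0 expf_eq0 g_gt0 /= !negb_or => /andP[/andP[-> ->] ->].
Qed.

Lemma on_curve_exists {z : C} : z != 0 -> z + 1 != 0 -> z - 1 != 0 ->
  exists2 w, on_curve g z w & w != 0.
Proof.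
move=> z_neq0 zp1_neq0 zm1_neq0.
set w := g.+1.-root (z ^+ g * (z + 1) * (z - 1)).
have curve : on_curve g z w by rewrite /on_curve rootCK.
have rhs_neq0 : z ^+ g * (z + 1) * (z - 1) != 0 by rewrite !mulf_neq0 ?expf_neq0.
by exists w => //; apply: contra_neq rhs_neq0 => w0; rewrite -curve w0 expr0n.
Qed.

Lemma on_curve_ratio_expr (z w : C) : on_curve g z w -> w != 0 ->
  (z / w) ^+ g.-1 = w ^+ 2 / (z * ((z + 1) * (z - 1))).
Proof.
move=> curve w_neq0; have [z_neq0 zp1_neq0 zm1_neq0] := on_curve_neq0 curve w_neq0.
move: curve; rewrite /on_curve -(prednK g_gt0) /= => curve.
apply/eqP; rewrite exprMn exprVn eqr_div ?expf_neq0 ?mulf_neq0 //.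
by rewrite -exprD addnC addn2 curve exprS; apply/eqP; ring.
Qed.

Definition sum_sq_numer (a0 a1 b0 b1 al be ga : C) : C -> C :=
  cubic (be * (a0 + b0)) (a0 * a1 + b0 * b1 + be * (al + ga))
        (a1 * al + b1 * ga - be * (a0 + b0) + be * (al - ga))
        (a1 * al - b1 * ga - (a0 * a1 + b0 * b1)).

Lemma sum_sq_phiE (a0 a1 b0 b1 al be ga z w : C) :
  on_curve g z w -> w != 0 ->
  phi1 g a0 a1 al be z w ^+ 2 + phi2 g a0 a1 al be z w ^+ 2
    + phi3 g b0 b1 be ga z w ^+ 2 + phi4 g b0 b1 be ga z w ^+ 2
  = 4 * sum_sq_numer a0 a1 b0 b1 al be ga z / (z * ((z + 1) * (z - 1)) ^+ 2).
Proof.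
move=> curve w_neq0; have [z_neq0 zp1_neq0 zm1_neq0] := on_curve_neq0 curve w_neq0.
set t := (z / w) ^+ g.-1.
set p := a0 * dzw z w + al * eta1 z w.
set q := a1 * t * dzw z w + be * eta2 z w.
set r := b1 * t * dzw z w + be * eta2 z w.
set s := b0 * dzw z w + ga * eta3 z w.
have -> : phi1 g a0 a1 al be z w ^+ 2 + phi2 g a0 a1 al be z w ^+ 2
    + phi3 g b0 b1 be ga z w ^+ 2 + phi4 g b0 b1 be ga z w ^+ 2
    = (p + q) ^+ 2 + 'i ^+ 2 * (p - q) ^+ 2 + (r + s) ^+ 2 + 'i ^+ 2 * (r - s) ^+ 2.
  by rewrite /phi1 /phi2 /phi3 /phi4 /p /q /r /s /t; ring.
rewrite sqrCi /p /q /r /s /t on_curve_ratio_expr // /dzw /eta1 /eta2 /eta3.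
rewrite /sum_sq_numer /cubic.
by field; rewrite w_neq0 z_neq0 zp1_neq0 zm1_neq0.
Qed.

Lemma sum_sq_vanishesP (a0 a1 b0 b1 al be ga : C) :
  sum_sq_vanishes g a0 a1 b0 b1 al be ga <->
  forall z : C, z != 0 -> z + 1 != 0 -> z - 1 != 0 ->
    sum_sq_numer a0 a1 b0 b1 al be ga z = 0.
Proof.
split=> [vanish z z_neq0 zp1_neq0 zm1_neq0 | numer0 z w curve w_neq0].
- have [w curve w_neq0] := on_curve_exists z_neq0 zp1_neq0 zm1_neq0.
  have den_neq0 : z * ((z + 1) * (z - 1)) ^+ 2 != 0 by rewrite !mulf_neq0 ?expf_neq0.
  have /eqP := vanish z w curve w_neq0; rewrite sum_sq_phiE //.
  by rewrite mulf_eq0 invr_eq0 (negbTE den_neq0) orbF mulf_eq0 pnatr_eq0 => /eqP.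
- have [z_neq0 zp1_neq0 zm1_neq0] := on_curve_neq0 curve w_neq0.
  by rewrite sum_sq_phiE // numer0 ?mulr0 ?mul0r.
Qed.

End Curve.

Lemma sum_sq_numer_coefs_eq0 (a0 a1 b0 b1 al be ga : C) :
  al != 0 -> be != 0 -> ga != 0 ->
  [/\ be * (a0 + b0) = 0, a0 * a1 + b0 * b1 + be * (al + ga) = 0,
      a1 * al + b1 * ga - be * (a0 + b0) + be * (al - ga) = 0
    & a1 * al - b1 * ga - (a0 * a1 + b0 * b1) = 0] <->
  a0 = (al + ga) / 2 /\ b0 = - a0 /\ a1 = - be /\ b1 = - a1.
Proof.
move=> al_neq0 be_neq0 ga_neq0.
split=> [| [-> [-> [-> ->]]]]; last by split; field.
set e1 := a1 * al + b1 * ga - be * (a0 + b0) + be * (al - ga).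
set e0 := a1 * al - b1 * ga - (a0 * a1 + b0 * b1).
set e2 := a0 * a1 + b0 * b1 + be * (al + ga); set e3 := be * (a0 + b0).
case=> e3_0 e2_0 e1_0 e0_0.
have b0E : b0 = - a0.
  by move/eqP: e3_0; rewrite /e3 mulf_eq0 (negbTE be_neq0) /= addrC addr_eq0 => /eqP.
have a1E : a1 = - be.
  have : 2 * (al * (a1 + be)) = e0 + e1 + e2 + e3 by rewrite /e0 /e1 /e2 /e3; ring.
  rewrite e0_0 e1_0 e2_0 e3_0 !addr0 => /(@natr_mul_eq0 _ 1) /eqP.
  by rewrite mulf_eq0 (negbTE al_neq0) addr_eq0 => /eqP.
have b1E : b1 = be.
  have : 2 * (ga * (be - b1)) = e0 - e1 + e2 - e3 by rewrite /e0 /e1 /e2 /e3; ring.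
  rewrite e0_0 e1_0 e2_0 e3_0 !subr0 addr0 => /(@natr_mul_eq0 _ 1) /eqP.
  by rewrite mulf_eq0 (negbTE ga_neq0) subr_eq0 => /eqP.
have : be * (al + ga - 2 * a0) = e2 by rewrite /e2 b0E a1E b1E; ring.
rewrite e2_0 => /eqP; rewrite mulf_eq0 (negbTE be_neq0) subr_eq0 => /eqP a0E.
by rewrite b0E a1E b1E opprK a0E; do !split; field.
Qed.

Theorem lemma7p11 (g : nat) (a0 a1 b0 b1 al be ga : C) :
  (2 <= g)%N -> al != 0 -> be != 0 -> ga != 0 ->
  (sum_sq_vanishes g a0 a1 b0 b1 al be ga <->
   (a0 = (al + ga) / 2 /\ b0 = - a0 /\ a1 = - be /\ b1 = - a1)).
Proof.
move=> g_ge2 al_neq0 be_neq0 ga_neq0; have g_gt0 : (0 < g)%N by exact: ltnW.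
rewrite sum_sq_vanishesP // -sum_sq_numer_coefs_eq0 //.
split=> [numer0 | [e3_0 e2_0 e1_0 e0_0] z _ _ _].
- have [p2 p2p p2m] := @natrSS_pm1_neq0 C 0.
  have [m2 m2p m2m] := @opp_natrSS_pm1_neq0 C 0.
  have [p3 p3p p3m] := @natrSS_pm1_neq0 C 1.
  have [m3 m3p m3m] := @opp_natrSS_pm1_neq0 C 1.
  exact: cubic_eq0_at_pm2_pm3 (numer0 _ p2 p2p p2m) (numer0 _ m2 m2p m2m)
                              (numer0 _ p3 p3p p3m) (numer0 _ m3 m3p m3m).
- by rewrite /sum_sq_numer e1_0 e0_0 e2_0 e3_0 /cubic; ring.
Qed.
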